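(* Let $X$ be a random vector in $\mathbb{R}^n$ such that $X\in B$ almost surely, where $B$ is a Borel subset of $\mathbb{R}^n$. Suppose there exist a measurable function $d:B\to\mathbb{R}^m$ and a constant $c>0$ such that $$\|d(x)-d(y)\|\ge c\,\|x-y\|\qquad\forall x,y\in B$$ (for some norms on $\mathbb{R}^m$ and $\mathbb{R}^n$). Then $\mathbb{P}\big(X\in\mathcal{C}_m(X)\big)=1$.
   Context: For a random vector $X$ in $\mathbb{R}^n$ and an integer $m\ge0$, the $m$-dimensional mould $\mathcal{C}_m(X)$ is the set of all $x\in\mathbb{R}^n$ such that $\liminf_{\epsilon\to0^+}\mathbb{P}(\|X-x\|_2<\epsilon)/\epsilon^m>0$. *)

From HB Require Import structures.
From mathcomp Require Import all_boot all_order all_algebra.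
From mathcomp Require Import all_classical all_reals all_analysis.
Set Implicit Arguments. Unset Strict Implicit. Unset Printing Implicit Defensive.
Import Order.TTheory GRing.Theory Num.Theory.
Import numFieldNormedType.Exports.
Local Open Scope classical_set_scope.
Local Open Scope ring_scope.

Definition euclid_norm {R : realType} {n : nat} (v : 'rV[R]_n) : R :=
  Num.sqrt (\sum_(i < n) v ord0 i ^+ 2).

(* Borel sets of R^n: sigma-algebra generated by the open sets (of the
   standard topology on 'rV[R]_n, which is the usual Euclidean topology). *)
Definition borel_rV {R : realType} (n : nat) (A : set 'rV[R]_n) : Prop :=
  <<s open >> A.

Definition random_vector {dT : measure_display} {T : measurableType dT}
  {R : realType} {n : nat} (X : T -> 'rV[R]_n) : Prop :=
  forall A : set 'rV[R]_n, borel_rV A -> measurable (X @^-1` A).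

Definition measurable_on_rV {R : realType} {n m : nat} (B : set 'rV[R]_n)
  (f : 'rV[R]_n -> 'rV[R]_m) : Prop :=
  forall A : set 'rV[R]_m, borel_rV A -> borel_rV (B `&` f @^-1` A).

Definition is_norm {R : realType} {n : nat} (N : 'rV[R]_n -> R) : Prop :=
  [/\ (forall v, N v = 0 -> v = 0),
      (forall (a : R) v, N (a *: v) = `|a| * N v) &
      (forall u v, N (u + v) <= N u + N v)].

(* The m-dimensional mould C_m(X) = { x | liminf_{eps -> 0+} P(||X - x||_2 < eps) / eps^m > 0 }. *)
Definition mould {dT : measure_display} {T : measurableType dT} {R : realType}
  (P : probability T R) {n : nat} (X : T -> 'rV[R]_n) (m : nat) : set 'rV[R]_n :=
  [set x | (0 < limf_einf
     (fun eps : R => P [set w | (euclid_norm (X w - x) < eps)%R] * ((eps ^+ m)^-1)%R%:E)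
     (0^'+))%E].

From HB Require Import structures.
From mathcomp Require Import all_boot all_order all_algebra.
From mathcomp Require Import all_classical all_reals all_analysis.
From mathcomp Require Import ring lra.
Import Order.TTheory GRing.Theory Num.Theory.
Import numFieldNormedType.Exports.
Local Open Scope classical_set_scope.
Local Open Scope ring_scope.

Set Implicit Arguments.
Unset Strict Implicit.
Unset Printing Implicit Defensive.

(** Push P forward by d o X (with d extended by 0 off B) to a finite Borel
    measure nu on R^m. Such a measure has lower density of order m almost
    everywhere. In the box [-2^p, 2^p)^m call a dyadic cube of level k light if
    its nu-mass is at most delta 2^(-km). The first light cubes met along the
    dyadic chains of the points are pairwise disjoint, so counting their
    descendants at a fine level bounds their total mass by delta 2^((p+1)m).
    As delta is arbitrary, at nu-almost every point all dyadic cubes are heavy,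
    and a ball of radius r contains the cube of side about r through its centre.
    Since d expands distances on B and all norms on R^n and R^m are equivalent,
    the event ||X - X w||_2 < e contains d(X) \in ball (d (X w)) (e / A) up to
    the null event X \notin B, so P (||X - X w||_2 < e) >= c (e / A)^m. *)

Local Notation borel R m := (g_sigma_algebraType (@open 'rV[R]_m)).

Lemma normr_coord_le (R : realType) m (v : 'rV[R]_m) i : `|v 0 i| <= `|v|.
Proof.
have -> : `|v| = mx_norm v by [].
by rewrite mx_normrE; apply/bigmax_geP; right; exists (ord0, i).
Qed.

Lemma normr_lt_coord (R : realType) m (v : 'rV[R]_m) r :
  0 < r -> (forall i, `|v 0 i| < r) -> `|v| < r.
Proof.
move=> r0 hv; have -> : `|v| = mx_norm v by [].
rewrite mx_normrE; apply: bigmax_lt => // -[a b] _ /=; rewrite (ord1 a).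
exact: hv.
Qed.

Section DyadicCubes.
Variables (R : realType) (m p : nat).

Definition pow2 k : R := (2 ^ k)%N%:R.

Lemma pow2_gt0 k : 0 < pow2 k.
Proof. by rewrite /pow2 ltr0n expn_gt0. Qed.

Lemma pow2D k l : pow2 (k + l) = pow2 k * pow2 l.
Proof. by rewrite /pow2 expnD natrM. Qed.

Lemma pow2S k : pow2 k.+1 = 2 * pow2 k.
Proof. by rewrite /pow2 expnS natrM. Qed.

(* Coordinates are shifted by 2^p, so that the cells of level k of
   dbox = [-2^p, 2^p)^m are indexed by [0, 2^(p+1+k))^m. *)
Definition dcube k (z : 'I_m -> nat) : set 'rV[R]_m :=
  [set y | forall i, (z i)%:R <= (y 0 i + pow2 p) * pow2 k < (z i).+1%:R].

Definition dbox : set 'rV[R]_m :=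
  [set y | forall i, 0 <= y 0 i + pow2 p < pow2 p.+1].

Lemma dcube_uniq k z z' y : dcube k z y -> dcube k z' y -> z =1 z'.
Proof. by move=> hz hz' i; rewrite -(truncn_def (hz i)) (truncn_def (hz' i)). Qed.

Lemma dcube_parent k l z y : (k <= l)%N ->
  dcube l z y -> dcube k (fun i => z i %/ 2 ^ (l - k))%N y.
Proof.
move=> /subnKC {1}<-; move: (l - k)%N => j hz i.
have /andP[lo hi] := hz i.
set t := y 0 i + pow2 p in lo hi *.
rewrite -(ler_pM2r (pow2_gt0 j)) -(ltr_pM2r (pow2_gt0 j)) -mulrA -pow2D.
rewrite /pow2 -!natrM; apply/andP; split.
  by apply: le_trans lo; rewrite ler_nat leq_divM.
apply: (lt_le_trans hi); rewrite ler_nat.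
rewrite {1}(divn_eq (z i) (2 ^ j)) mulSn addnC -addSn leq_add2r.
by rewrite ltn_pmod // expn_gt0.
Qed.

Lemma dcube_corner k (z : 'I_m -> nat) :
  dcube k z (\row_i ((z i)%:R / pow2 k - pow2 p)).
Proof.
move=> i; rewrite mxE subrK mulfVK; last by rewrite gt_eqF // pow2_gt0.
by apply/andP; split; [exact: lexx | rewrite ltr_nat].
Qed.

Lemma dbox_dcube k y :
  dbox y -> exists z, dcube k z y /\ forall i, (z i < 2 ^ (p.+1 + k))%N.
Proof.
move=> hy.
have t0 i : 0 <= (y 0 i + pow2 p) * pow2 k.
  by apply: mulr_ge0; [case/andP: (hy i) | exact: ltW (pow2_gt0 k)].
exists (fun i => Num.truncn ((y 0 i + pow2 p) * pow2 k)); split.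
  by move=> i; exact: truncn_itv.
move=> i; have /andP[lo _] := truncn_itv (t0 i).
rewrite -(ltr_nat R); apply: (le_lt_trans lo).
have /andP[_ hi] := hy i.
by rewrite -/(pow2 _) pow2D ltr_pM2r // pow2_gt0.
Qed.

Lemma dcube_dist k z y y' r :
  dcube k z y -> dcube k z y' -> (pow2 k)^-1 <= r -> `|y - y'| < r.
Proof.
move=> hy hy' hr.
have r0 : 0 < r by apply: lt_le_trans hr; rewrite invr_gt0 pow2_gt0.
apply: normr_lt_coord => // i; apply: lt_le_trans hr.
rewrite -(ltr_pM2r (pow2_gt0 k)) mulVf ?gt_eqF ?pow2_gt0 //.
have -> : `|(y - y') 0 i| * pow2 k = `|(y - y') 0 i * pow2 k|.
  by rewrite normrM (ger0_norm (ltW (pow2_gt0 k))).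
rewrite mxE [X in X * _]/= mxE.
have -> : (y 0 i - y' 0 i) * pow2 k =
    (y 0 i + pow2 p) * pow2 k - (y' 0 i + pow2 p) * pow2 k.
  by rewrite -mulrBl opprD addrACA subrr addr0.
have /andP[a1 a2] := hy i; have /andP[b1 b2] := hy' i.
rewrite -natr1 in a2 b2.
rewrite ltr_norml; apply/andP; split; lra.
Qed.

End DyadicCubes.

Arguments dcube : clear implicits.
Arguments dbox : clear implicits.

Lemma exists_dbox (R : realType) m (y : 'rV[R]_m) : exists p, dbox R m p y.
Proof.
exists (Num.truncn `|y|) => i; set p := Num.truncn `|y|.
have : `|y 0 i| < pow2 R p.
  apply: le_lt_trans (normr_coord_le y i) _.
  have /andP[_ hi] := truncn_itv (normr_ge0 y).
  by apply: lt_le_trans hi _; rewrite ler_nat; exact: ltn_expl.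
rewrite pow2S ltr_norml => /andP[lo hi].
by apply/andP; split; lra.
Qed.

Lemma exists_pow2_inv_between (R : realType) (r : R) : 0 < r -> r <= 1 ->
  exists k, (pow2 R k)^-1 <= r /\ r / 2 <= (pow2 R k)^-1.
Proof.
move=> r0 r1.
have ex : exists k, (pow2 R k)^-1 <= r.
  have ri0 : 0 <= r^-1 by rewrite invr_ge0 ltW.
  have /andP[_ hi] := truncn_itv ri0.
  exists (Num.truncn r^-1).
  rewrite -[leRHS](invrK r) lef_pV2 ?posrE ?invr_gt0 ?pow2_gt0 //.
  by apply: ltW; apply: lt_le_trans hi _; rewrite ler_nat; exact: ltn_expl.
case: (ex_minnP ex) => k hk kmin; exists k; split => //.
case: k hk kmin => [|k] hk kmin.
  rewrite /pow2 expn0 invr1 ler_pdivrMr // mul1r (le_trans r1) //.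
  by rewrite (ler_nat R 1 2).
have : ~~ ((pow2 R k)^-1 <= r) by apply/negP => /kmin; rewrite ltnn.
rewrite -ltNge => hlt.
by rewrite pow2S invfM [X in _ <= X]mulrC ler_wpM2r // ?ltW //.
Qed.

Section BorelRowVectors.
Variables (R : realType) (m : nat).

Lemma open_measurable_rV (A : set 'rV[R]_m) : open A -> measurable (A : set (borel R m)).
Proof. exact: sub_gen_smallest. Qed.

Lemma closed_measurable_rV (A : set 'rV[R]_m) :
  closed A -> measurable (A : set (borel R m)).
Proof.
move=> cA; rewrite -(setCK A); apply: measurableC; apply: open_measurable_rV.
exact: closed_openC.
Qed.

Lemma measurable_coord_itv (a b : 'I_m -> R) (s t : R) :
  measurable ([set y : 'rV[R]_m | forall i, a i <= (y 0 i + s) * t < b i]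
    : set (borel R m)).
Proof.
have cont i : continuous (fun y : 'rV[R]_m => (y 0 i + s) * t).
  move=> y; apply: (@continuousM _ _ (fun y : 'rV[R]_m => y 0 i + s) (fun=> t)).
    apply: (@continuousD _ _ _ (fun y : 'rV[R]_m => y 0 i) (fun=> s)).
      exact: coord_continuous.
    exact: cst_continuous.
  exact: cst_continuous.
have -> : [set y : 'rV[R]_m | forall i, a i <= (y 0 i + s) * t < b i] =
    \bigcap_(i in [set: 'I_m])
      ([set y | a i <= (y 0 i + s) * t] `&` [set y | (y 0 i + s) * t < b i]).
  apply/seteqP; split => y.
    by move=> hy i _; have /andP[] := hy i.
  by move=> hy i; have [lo hi] := hy i I; apply/andP.
apply: fin_bigcap_measurable; first exact: finite_finset.
move=> i _; apply: measurableI.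
  apply: closed_measurable_rV.
  exact: (proj1 (continuous_closedP _) (cont i) _ (@closed_ge _ (a i))).
apply: open_measurable_rV.
exact: (proj1 (continuousP _) (cont i) _ (@open_lt _ (b i))).
Qed.

Lemma dcube_measurable p k z : measurable (dcube R m p k z : set (borel R m)).
Proof. exact: measurable_coord_itv. Qed.

Lemma dbox_measurable p : measurable (dbox R m p : set (borel R m)).
Proof.
have -> : dbox R m p = [set y : 'rV[R]_m |
    forall i, (fun=> 0) i <= (y 0 i + pow2 R p) * 1 < (fun=> pow2 R p.+1) i].
  by apply/seteqP; split => y hy i; have := hy i; rewrite mulr1.
exact: measurable_coord_itv.
Qed.

End BorelRowVectors.

Lemma measure_bigsetU_le d (T : measurableType d) (R : realType)
    (mu : {measure set T -> \bar R}) (I : Type) (s : seq I) (P : pred I)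
    (F : I -> set T) :
  (forall i, measurable (F i)) ->
  (mu (\big[setU/set0]_(i <- s | P i) F i) <= \sum_(i <- s | P i) mu (F i))%E.
Proof.
move=> mF; elim: s => [|a s ih]; first by rewrite !big_nil measure0.
rewrite !big_cons; case: (P a) => //.
apply: le_trans (measureU2 _ _ _) _ => //; first exact: bigsetU_measurable.
exact: leeD.
Qed.

Lemma bigsetU_seq_mem (T : Type) (I : eqType) (s : seq I) (P : pred I)
    (F : I -> set T) i y :
  i \in s -> P i -> F i y -> (\big[setU/set0]_(j <- s | P j) F j) y.
Proof.
elim: s => [//|a s ih]; rewrite inE big_cons => /orP[/eqP<-|hs] Pi Fy.
  by rewrite Pi; left.
by case: (P a); [right|]; apply: ih.
Qed.

Lemma card_bigcup_disjoint (T : finType) (A : nat -> {set T}) n :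
  (forall a b, (a < b)%N -> (b < n)%N -> A a :&: A b = finset.set0) ->
  (\sum_(k < n) #|A k|)%N = #|(\bigcup_(k < n) A k)%SET|.
Proof.
elim: n => [|n ih] disj; first by rewrite !big_ord0 cards0.
rewrite !big_ord_recr /= cardsU ih; last first.
  by move=> a b ab bn; apply: disj => //; exact: leqW.
suff -> : (\bigcup_(k < n) A k)%SET :&: A n = finset.set0 by rewrite cards0 subn0.
apply/setP => x; rewrite !inE; apply/negP => /andP[/bigcupP[k _ xk] xn].
have := disj k n (ltn_ord k) (ltnSn n); move/setP/(_ x); rewrite !inE xk xn.
by [].
Qed.

Section LightCubes.
Variables (R : realType) (m : nat) (nu : {measure set (borel R m) -> \bar R}).
Variables (p : nat) (delta : R).
Local Notation dcube := (dcube R m p).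
Local Notation dbox := (dbox R m p).
Local Notation pow2 := (pow2 R).

Definition light_cube k z := (nu (dcube k z) <= (delta / pow2 k ^+ m)%:E)%E.

Definition in_light_cube k y := exists z, dcube k z y /\ light_cube k z.

Definition first_light k y :=
  [/\ dbox y, in_light_cube k y & forall j, (j < k)%N -> ~ in_light_cube j y].

(* Written as a successor so that [inord] applies to the cell indices. *)
Definition ncell k := ((2 ^ (p.+1 + k)).-1.+1)%N.

Lemma ncellE k : ncell k = (2 ^ (p.+1 + k))%N.
Proof. by rewrite /ncell prednK // expn_gt0. Qed.

Local Notation cells k := {ffun 'I_m -> 'I_(ncell k)}.

Definition cell_nat k (z : cells k) : 'I_m -> nat := fun i => z i.

Definition cell_of k (z : 'I_m -> nat) : cells k := [ffun i => inord (z i)].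

Lemma cell_ofK k z :
  (forall i, (z i < 2 ^ (p.+1 + k))%N) -> cell_nat (cell_of k z) =1 z.
Proof. by move=> hz i; rewrite /cell_nat ffunE inordK // prednK ?expn_gt0. Qed.

Lemma dcube_ext k z z' : z =1 z' -> dcube k z = dcube k z'.
Proof. by move=> e; rewrite (boolp.funext e). Qed.

Definition first_light_cells k : {set cells k} :=
  [set z | `[< exists y, first_light k y /\ dcube k (cell_nat z) y >]].

Definition first_light_union k : set (borel R m) :=
  \big[setU/set0]_(z in first_light_cells k) dcube k (cell_nat z).

Definition light_union k : set (borel R m) :=
  \big[setU/set0]_(z : cells k | `[< light_cube k (cell_nat z) >]) dcube k (cell_nat z).

Definition light_points : set (borel R m) := dbox `&` \bigcup_k light_union k.

Lemma light_points_measurable : measurable light_points.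
Proof.
apply: measurableI; first exact: dbox_measurable.
apply: bigcup_measurable => k _.
by apply: bigsetU_measurable => z _; exact: dcube_measurable.
Qed.

Lemma first_light_union_measurable k : measurable (first_light_union k).
Proof. by apply: bigsetU_measurable => z _; exact: dcube_measurable. Qed.

Lemma light_unionP k y : dbox y -> light_union k y <-> in_light_cube k y.
Proof.
move=> hy; split.
  rewrite /light_union -bigcup_seq_cond => -[z /= /andP[_ /asboolP lz] cz].
  by exists (cell_nat z).
move=> [z [cz lz]].
have [z' [cz' z'lt]] := dbox_dcube k hy.
have e := dcube_uniq cz cz'.
apply: (@bigsetU_seq_mem _ _ _ _ _ (cell_of k z')); first exact: mem_index_enum.
  by apply/asboolP; rewrite /light_cube (dcube_ext k (cell_ofK z'lt)) -(dcube_ext k e).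
by rewrite (dcube_ext k (cell_ofK z'lt)).
Qed.

Lemma light_points_sub : light_points `<=` \bigcup_k first_light_union k.
Proof.
move=> y [hy [k _ /(light_unionP k hy) lk]].
have ex : exists k, `[< in_light_cube k y >] by exists k; apply/asboolP.
case: (ex_minnP ex) => k0 /asboolP l0 kmin.
have [z [cz zlt]] := dbox_dcube k0 hy.
exists k0 => //; apply: (@bigsetU_seq_mem _ _ _ _ _ (cell_of k0 z)).
- exact: mem_index_enum.
- rewrite inE; apply/asboolP; exists y.
  split; last by rewrite (dcube_ext k0 (cell_ofK zlt)).
  split => // j jk lj.
  by have := kmin j (introT (asboolP _) lj); rewrite leqNgt jk.
- by rewrite (dcube_ext k0 (cell_ofK zlt)).
Qed.

Lemma first_light_cell_light k z :
  z \in first_light_cells k -> light_cube k (cell_nat z).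
Proof.
rewrite inE => /asboolP [y [[_ [z' [cz' lz']] _] cy]].
by rewrite /light_cube -(dcube_ext k (dcube_uniq cz' cy)).
Qed.

Lemma first_light_union_le k :
  (nu (first_light_union k) <= (#|first_light_cells k|%:R * (delta / pow2 k ^+ m))%:E)%E.
Proof.
apply: le_trans (measure_bigsetU_le nu _ _ _) _; first by move=> z; exact: dcube_measurable.
apply: le_trans (lee_sum _ (fun z hz => first_light_cell_light hz)) _.
by rewrite sumEFin sumr_const mulr_natl.
Qed.

Section Counting.
Variable K : nat.

Local Notation offsets k := {ffun 'I_m -> 'I_(2 ^ (K - k))%N}.

Definition refine_cell k (zf : cells k * offsets k) : cells K :=
  [ffun i => inord (zf.1 i * 2 ^ (K - k) + zf.2 i)%N].

Lemma refine_cellE k (zf : cells k * offsets k) i : (k <= K)%N ->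
  (refine_cell zf i : nat) = (zf.1 i * 2 ^ (K - k) + zf.2 i)%N.
Proof.
move=> kK; rewrite ffunE inordK // prednK ?expn_gt0 //.
have z_lt : (zf.1 i < 2 ^ (p.+1 + k))%N by rewrite -ncellE.
have -> : (2 ^ (p.+1 + K) = 2 ^ (p.+1 + k) * 2 ^ (K - k))%N.
  by rewrite -expnD -addnA subnKC.
apply: (@leq_trans ((zf.1 i).+1 * 2 ^ (K - k))%N).
  by rewrite mulSn [X in (_ < X)%N]addnC ltn_add2l.
by rewrite leq_mul2r z_lt orbT.
Qed.

Lemma refine_cell_inj k : (k <= K)%N -> injective (@refine_cell k).
Proof.
move=> kK [z1 f1] [z2 f2] /ffunP e.
have e' i : (z1 i * 2 ^ (K - k) + f1 i = z2 i * 2 ^ (K - k) + f2 i)%N.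
  by have := congr1 val (e i); rewrite /= !refine_cellE.
congr pair; apply/ffunP => i; apply: val_inj => /=.
  have := congr1 (divn^~ (2 ^ (K - k))%N) (e' i).
  by rewrite /= !divnMDl ?expn_gt0 // !divn_small // !addn0.
have := congr1 (modn^~ (2 ^ (K - k))%N) (e' i).
by rewrite /= !modnMDl !modn_small.
Qed.

Definition refined_first_light k : {set cells K} :=
  @refine_cell k @: finset.setX (first_light_cells k) [set: offsets k].

Lemma card_refined_first_light k : (k <= K)%N ->
  #|refined_first_light k| = (#|first_light_cells k| * (2 ^ (K - k)) ^ m)%N.
Proof.
move=> kK; rewrite card_imset; last exact: refine_cell_inj.
by rewrite cardsX cardsT card_ffun !card_ord.
Qed.

Lemma refine_cell_dcube k (z : cells k) (f : offsets k) : (k <= K)%N ->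
  dcube k (cell_nat z) (\row_i ((refine_cell (z, f) i : nat)%:R / pow2 K - pow2 p)).
Proof.
move=> kK.
rewrite (dcube_ext k (_ : cell_nat z =1 fun i => refine_cell (z, f) i %/ 2 ^ (K - k))%N).
  exact: dcube_parent kK (@dcube_corner R m p K (fun i => refine_cell (z, f) i : nat)).
by move=> i; rewrite refine_cellE // divnMDl ?expn_gt0 // divn_small ?addn0.
Qed.

Lemma refined_first_light_disjoint k1 k2 : (k1 < k2)%N -> (k2 <= K)%N ->
  refined_first_light k1 :&: refined_first_light k2 = finset.set0.
Proof.
move=> k12 k2K; have k1K : (k1 <= K)%N := ltnW (leq_trans k12 k2K).
apply/setP => g; rewrite !inE; apply/negP.
case/andP=> /imsetP[[z1 f1] /setXP[hz1 _] ->] /imsetP[[z2 f2] /setXP[hz2 _] e].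
have c1 := refine_cell_dcube z1 f1 k1K; rewrite e in c1.
have c2 := refine_cell_dcube z2 f2 k2K.
move: hz2; rewrite inE => /asboolP [y2 [[_ _ y2min] c2']].
have up y' : dcube k2 (cell_nat z2) y' ->
    dcube k1 (fun i => cell_nat z2 i %/ 2 ^ (k2 - k1))%N y'.
  exact: dcube_parent (ltnW k12).
have e1 := dcube_uniq c1 (up _ c2).
apply: (y2min k1 k12); exists (cell_nat z1); split; last exact: first_light_cell_light hz1.
by move=> i; rewrite e1; exact: up _ c2' i.
Qed.

Lemma first_light_count :
  (\sum_(k < K) #|first_light_cells k| * (2 ^ (K - k)) ^ m <= (2 ^ (p.+1 + K)) ^ m)%N.
Proof.
rewrite (eq_bigr (fun k : 'I_K => #|refined_first_light k|)); last first.
  by move=> k _; rewrite card_refined_first_light // ltnW.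
rewrite card_bigcup_disjoint; last first.
  by move=> a b ab bK; apply: refined_first_light_disjoint => //; exact: ltnW.
by apply: leq_trans (max_card _) _; rewrite card_ffun !card_ord ncellE.
Qed.

End Counting.

Lemma first_light_partial_sum_le K : 0 <= delta ->
  (\sum_(k < K) nu (first_light_union k) <= (delta * pow2 p.+1 ^+ m)%:E)%E.
Proof.
move=> delta0.
apply: (@le_trans _ _ (\sum_(k < K)
    ((#|first_light_cells k|%:R * (delta / pow2 k ^+ m))%:E))%E).
  by apply: lee_sum => k _; exact: first_light_union_le.
rewrite sumEFin lee_fin.
have pm0 k : pow2 k ^+ m != 0 by rewrite expf_neq0 // gt_eqF // pow2_gt0.
have e (k : 'I_K) : #|first_light_cells k|%:R * (delta / pow2 k ^+ m) =
    delta / pow2 K ^+ m * (#|first_light_cells k| * (2 ^ (K - k)) ^ m)%:R.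
  have -> : pow2 K = pow2 k * pow2 (K - k) by rewrite -pow2D subnKC // ltnW.
  rewrite natrM natrX -/(pow2 (K - k)) exprMn.
  by field; rewrite !pm0.
rewrite (eq_bigr _ (fun k _ => e k)) -mulr_sumr -natr_sum.
have h0 : 0 <= delta / pow2 K ^+ m by rewrite divr_ge0 // exprn_ge0 // ltW // pow2_gt0.
apply: le_trans (@ler_wpM2l _ _ h0 _ (((2 ^ (p.+1 + K)) ^ m)%N%:R) _) _.
  by rewrite ler_nat; exact: first_light_count.
rewrite natrX -/(pow2 (p.+1 + K)) pow2D exprMn.
by rewrite le_eqVlt; apply/orP; left; apply/eqP; field; rewrite pm0.
Qed.

Lemma light_points_le : 0 <= delta -> (nu light_points <= (delta * pow2 p.+1 ^+ m)%:E)%E.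
Proof.
move=> delta0.
apply: le_trans (measure_sigma_subadditive nu first_light_union_measurable
  light_points_measurable light_points_sub) _.
apply: lime_le; first by apply: is_cvg_nneseries => k _ _; exact: measure_ge0.
by apply: nearW => K; rewrite big_mkord; exact: first_light_partial_sum_le.
Qed.

Lemma ball_ge_off_light_points y : dbox y -> 0 <= delta -> ~ light_points y ->
  forall r, 0 < r -> r <= 1 -> ((delta / 2 ^+ m * r ^+ m)%:E <= nu (ball y r))%E.
Proof.
move=> hy delta0 yL r r0 r1.
have [k [kr rk]] := exists_pow2_inv_between r0 r1.
have [z [cz _]] := dbox_dcube k hy.
have heavy : ((delta / pow2 k ^+ m)%:E < nu (dcube k z))%E.
  rewrite ltNge; apply/negP => lz; apply: yL; split => //.
  by exists k => //; apply/(light_unionP k hy); exists z.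
have sub : dcube k z `<=` ball y r.
  by move=> y' cy'; rewrite -ball_normE /ball_ /=; exact: dcube_dist cz cy' kr.
apply: le_trans (le_measure nu _ _ sub); last first.
- by rewrite inE; apply: open_measurable_rV; exact: ball_open.
- by rewrite inE; exact: dcube_measurable.
apply: le_trans (ltW heavy); rewrite lee_fin.
have -> : delta / 2 ^+ m * r ^+ m = delta * (r / 2) ^+ m by rewrite expr_div_n; ring.
rewrite -exprVn; apply: ler_wpM2l => //.
apply: lerXn2r => //; rewrite ?nnegrE //; first by rewrite divr_ge0 // ltW.
by rewrite invr_ge0 ltW // pow2_gt0.
Qed.

End LightCubes.

Lemma ereal_le0_invS (R : realType) (x : \bar R) :
  (forall j : nat, (x <= (j.+1%:R^-1)%:E)%E) -> (x <= 0)%E.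
Proof.
move=> hx; apply/lee_addgt0Pr => e e0; rewrite add0e.
have ei0 : 0 <= e^-1 by rewrite invr_ge0 ltW.
have /andP[_ hj] := truncn_itv ei0.
apply: le_trans (hx (Num.truncn e^-1)) _; rewrite lee_fin.
rewrite -[leRHS](invrK e) lef_pV2 ?posrE ?invr_gt0 ?ltr0n //; exact: ltW.
Qed.

Theorem ae_ball_lower_bound (R : realType) m (nu : {measure set (borel R m) -> \bar R}) :
  {ae nu, forall y, exists2 c : R, 0 < c &
    forall r, 0 < r -> r <= 1 -> ((c * r ^+ m)%:E <= nu (ball y r))%E}.
Proof.
pose delta p (j : nat) : R := j.+1%:R^-1 / pow2 R p.+1 ^+ m.
have delta0 p j : 0 < delta p j.
  by rewrite divr_gt0 ?invr_gt0 ?ltr0n // exprn_gt0 // pow2_gt0.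
pose L p := \bigcap_j light_points nu p (delta p j).
have mL p : measurable (L p).
  by apply: bigcap_measurableType => j _; exact: light_points_measurable.
have L0 p : nu (L p) = 0.
  apply/eqP; rewrite eq_le measure_ge0 andbT; apply: ereal_le0_invS => j.
  have Lj : L p `<=` light_points nu p (delta p j) by move=> y Ly; exact: Ly j I.
  apply: le_trans (le_measure nu (mem_set (mL p))
    (mem_set (light_points_measurable nu p (delta p j))) Lj) _.
  apply: le_trans (light_points_le nu p (ltW (delta0 p j))) _.
  by rewrite lee_fin /delta mulrAC -mulrA divff ?mulr1 // expf_neq0 // gt_eqF // pow2_gt0.
have mUL : measurable (\bigcup_p L p) by apply: bigcup_measurable => p _; exact: mL.
exists (\bigcup_p L p); split => //.
  apply/eqP; rewrite eq_le measure_ge0 andbT.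
  apply: le_trans (measure_sigma_subadditive nu mL mUL (@subset_refl _ _)) _.
  by rewrite eseries0 // => p _ _; exact: L0.
move=> y /= no_c; apply: contrapT => yL; apply: no_c.
have [p hy] := exists_dbox y.
have /existsNP[j yLj] : ~ forall j, light_points nu p (delta p j) y.
  by move=> hL; apply: yL; exists p => // j _; exact: hL.
exists (delta p j / 2 ^+ m); first by rewrite divr_gt0 // exprn_gt0.
exact: ball_ge_off_light_points hy (ltW (delta0 p j)) yLj.
Qed.

Section IsNorm.
Variables (R : realType) (n : nat) (N : 'rV[R]_n -> R).
Hypothesis hN : is_norm N.

Lemma is_norm0 : N 0 = 0.
Proof. by case: hN => _ hZ _; rewrite -(scale0r (0 : 'rV[R]_n)) hZ normr0 mul0r. Qed.

Lemma is_normN v : N (- v) = N v.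
Proof. by case: hN => _ hZ _; rewrite -scaleN1r hZ normrN1 mul1r. Qed.

Lemma is_norm_ge0 v : 0 <= N v.
Proof. by case: hN => _ _ hT; have := hT v (- v); rewrite subrr is_norm0 is_normN => h; lra. Qed.

Lemma is_norm_lerB u v : N u - N v <= N (u - v).
Proof. by case: hN => _ _ hT; rewrite lerBlDr; have := hT (u - v) v; rewrite subrK. Qed.

Lemma is_norm_sum (s : seq 'I_n) (F : 'I_n -> 'rV[R]_n) :
  N (\sum_(i <- s) F i) <= \sum_(i <- s) N (F i).
Proof.
case: hN => _ _ hT; elim: s => [|a s ih]; first by rewrite !big_nil is_norm0.
by rewrite !big_cons; apply: le_trans (hT _ _) _; rewrite lerD2l.
Qed.

Lemma is_norm_le_mx_norm : exists2 C, 0 < C & forall v, N v <= C * `|v|.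
Proof.
exists (1 + \sum_(i < n) N 'e_i).
  apply: lt_le_trans ltr01 _; rewrite lerDl sumr_ge0 // => i _.
  exact: is_norm_ge0.
move=> v; case: hN => _ hZ _.
rewrite {1}(row_sum_delta v); apply: le_trans (is_norm_sum _ _) _.
rewrite mulrDl mul1r mulr_suml addrC.
apply: (@le_trans _ _ (\sum_(i < n) N 'e_i * `|v|)); last by rewrite lerDl.
apply: ler_sum => i _; rewrite hZ mulrC ler_wpM2l ?is_norm_ge0 //.
exact: normr_coord_le.
Qed.

Lemma is_norm_continuous : continuous N.
Proof.
have [C C0 hC] := is_norm_le_mx_norm.
move=> x; apply/(@cvgrPdist_lt _ _ _ _ (@nbhs_filter _ (x : 'rV[R]_n))) => e e0.
apply/nbhs_ballP; exists (e / C); first exact: divr_gt0.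
move=> y; rewrite -ball_normE /ball_ /= => xy.
apply: le_lt_trans (_ : C * `|x - y| < e); last by rewrite mulrC -ltr_pdivlMr.
rewrite ler_norml; apply/andP; split.
  by rewrite lerNl opprB; apply: le_trans (is_norm_lerB _ _) _; rewrite -opprB is_normN.
by apply: le_trans (is_norm_lerB _ _) _; exact: hC.
Qed.

(* The minimum of N on the compact unit sphere of the sup norm is positive. *)
Lemma mx_norm_le_is_norm : exists2 c, 0 < c & forall v, `|v| <= c * N v.
Proof.
have [[v0 v00]|] := pselect (exists v : 'rV[R]_n, v != 0); last first.
  move=> no_v; exists 1 => // v; rewrite mul1r.
  have -> : v = 0 by apply/eqP; apply: contra_notT no_v => vn0; exists v.
  by rewrite normr0 is_norm_ge0.
pose S := [set v : 'rV[R]_n | `|v| = 1].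
have unitS v : v != 0 -> S (`|v|^-1 *: v).
  move=> vn0; have nv : `|v| != 0 by rewrite normr_eq0.
  by rewrite /S /= normrZ normrV ?unitfE // normr_id mulVf.
have cS : closed S.
  exact: (proj1 (continuous_closedP _) (@norm_continuous _ _) _ (@closed_eq _ 1)).
have bS : bounded_set S.
  by exists 1; split => // M M1 x Sx /=; rewrite Sx; exact: ltW.
have kS : compact S by exact: bounded_closed_compact.
have [u Su umin] := EVT_min_rV (ex_intro _ _ (unitS _ v00)) kS
  (continuous_subspaceT is_norm_continuous).
move: Su; rewrite inE /S /= => Su.
have Nu : 0 < N u.
  rewrite lt_neqAle is_norm_ge0 andbT eq_sym; apply/eqP => Nu0.
  case: hN => N0 _ _; move: Su; rewrite (N0 _ Nu0) normr0 => /eqP.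
  by rewrite eq_sym oner_eq0.
exists (N u)^-1 => [|v]; first by rewrite invr_gt0.
have [->|vn0] := eqVneq v 0; first by rewrite normr0 mulr_ge0 ?invr_ge0 ?is_norm_ge0.
have nv : `|v| != 0 by rewrite normr_eq0.
have := umin _ (mem_set (unitS _ vn0)).
case: hN => _ hZ _; rewrite hZ normrV ?unitfE // normr_id => h.
rewrite mulrC ler_pdivlMr // -(ler_pM2l (_ : 0 < `|v|^-1)); last first.
  by rewrite invr_gt0 lt_neqAle eq_sym nv normr_ge0.
by rewrite mulrA mulVf // mul1r.
Qed.

End IsNorm.

Lemma euclid_norm_le (R : realType) n (v : 'rV[R]_n) : euclid_norm v <= n%:R * `|v|.
Proof.
have h : \sum_(i < n) v ord0 i ^+ 2 <= (n%:R * `|v|) ^+ 2.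
  apply: (@le_trans _ _ (\sum_(i < n) `|v| ^+ 2)).
    apply: ler_sum => i _; rewrite -real_normK ?num_real //.
    by apply: lerXn2r; rewrite ?nnegrE //; exact: normr_coord_le.
  rewrite sumr_const card_ord -(mulr_natl (`|v| ^+ 2) n) exprMn ler_wpM2r // -natrX ler_nat.
  by case: (n) => // k; rewrite expnS leq_pmulr // expn_gt0.
by apply: le_trans (ler_wsqrtr h) _; rewrite sqrtr_sqr ger0_norm // mulr_ge0.
Qed.

Lemma open_euclid_ball (R : realType) n (x : 'rV[R]_n) e :
  open [set y : 'rV[R]_n | euclid_norm (y - x) < e].
Proof.
have sq_cont (s : seq 'I_n) :
    continuous (fun y : 'rV[R]_n => \sum_(i <- s) (y - x) ord0 i ^+ 2).
  elim: s => [|a s ih].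
    have -> : (fun y : 'rV[R]_n => \sum_(i <- [::]) (y - x) ord0 i ^+ 2) = (fun=> 0).
      by apply: boolp.funext => y; rewrite big_nil.
    exact: cst_continuous.
  have -> : (fun y : 'rV[R]_n => \sum_(i <- a :: s) (y - x) ord0 i ^+ 2) =
    (fun y => (y ord0 a - x ord0 a) * (y ord0 a - x ord0 a) +
              \sum_(i <- s) (y - x) ord0 i ^+ 2).
    by apply: boolp.funext => y; rewrite big_cons !mxE expr2.
  move=> y; apply: (@continuousD _ _ _
    (fun y : 'rV[R]_n => (y ord0 a - x ord0 a) * (y ord0 a - x ord0 a))); last exact: ih.
  have ca : {for y, continuous (fun y : 'rV[R]_n => y ord0 a - x ord0 a)}.
    apply: (@continuousD _ _ _ (fun y : 'rV[R]_n => y ord0 a) (fun=> - x ord0 a)).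
      exact: coord_continuous.
    exact: cst_continuous.
  exact: (@continuousM _ _ (fun y : 'rV[R]_n => y ord0 a - x ord0 a) _ _ ca ca).
have cont : continuous (fun y : 'rV[R]_n => euclid_norm (y - x)).
  move=> y; apply: (@continuous_comp _ _ _
    (fun y : 'rV[R]_n => \sum_(i < n) (y - x) ord0 i ^+ 2) Num.sqrt).
    exact: sq_cont.
  exact: sqrt_continuous.
exact: (proj1 (continuousP _) cont _ (@open_lt _ e)).
Qed.

Lemma euclid_le_image_dist (R : realType) n m (B : set 'rV[R]_n)
    (d : 'rV[R]_n -> 'rV[R]_m) (Nn : 'rV[R]_n -> R) (Nm : 'rV[R]_m -> R) (c : R) :
  is_norm Nn -> is_norm Nm -> 0 < c ->
  (forall x y, B x -> B y -> c * Nn (x - y) <= Nm (d x - d y)) ->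
  exists2 A : R, 0 < A &
    forall x y, B x -> B y -> euclid_norm (x - y) <= A * `|d x - d y|.
Proof.
move=> hNn hNm c0 hd.
have [K K0 hK] := mx_norm_le_is_norm hNn.
have [C C0 hC] := is_norm_le_mx_norm hNm.
have n1 : 0 < n%:R + 1 :> R by have := ler0n R n; lra.
exists ((n%:R + 1) * K * C / c) => [|x y Bx By].
  by apply: divr_gt0 => //; apply: mulr_gt0 => //; exact: mulr_gt0.
have h1 : euclid_norm (x - y) <= (n%:R + 1) * `|x - y|.
  by apply: le_trans (euclid_norm_le _) _; rewrite ler_wpM2r // lerDl.
have h2 : Nn (x - y) <= C * `|d x - d y| / c.
  by rewrite ler_pdivlMr // mulrC; apply: le_trans (hd _ _ Bx By) (hC _).
apply: le_trans h1 _; rewrite -!mulrA; apply: ler_wpM2l; first exact: ltW n1.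
apply: le_trans (hK _) _; apply: ler_wpM2l; first exact: ltW K0.
by apply: le_trans h2 _; rewrite mulrA mulrAC.
Qed.

Definition restrict0 (R : realType) n m (B : set 'rV[R]_n) (d : 'rV[R]_n -> 'rV[R]_m)
  (x : 'rV[R]_n) : 'rV[R]_m := if `[< B x >] then d x else 0.

Lemma measurable_restrict0 (R : realType) n m (B : set 'rV[R]_n)
    (d : 'rV[R]_n -> 'rV[R]_m) :
  borel_rV B -> measurable_on_rV B d ->
  measurable_fun setT (restrict0 B d : borel R n -> borel R m).
Proof.
move=> bB md _ A mA; rewrite setTI.
have -> : restrict0 B d @^-1` A = (B `&` d @^-1` A) `|` (~` B `&` (fun=> A 0)).
  apply/seteqP; split => x; rewrite /restrict0 /=;
    case: (pselect (B x)) => Bx.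
  - by rewrite asboolT // => h; left.
  - by rewrite asboolF // => h; right.
  - by rewrite asboolT // => -[[]|[]].
  - by rewrite asboolF // => -[[]|[]].
apply: measurableU; first exact: md.
apply: measurableI; first by apply: measurableC; exact: bB.
have [A0|A0] := pselect (A 0).
  by rewrite (_ : (fun=> A 0) = setT) //; apply/seteqP; split.
by rewrite (_ : (fun=> A 0) = set0) //; apply/seteqP; split.
Qed.

Lemma restrict0_ball_euclid (R : realType) n m (B : set 'rV[R]_n)
    (d : 'rV[R]_n -> 'rV[R]_m) (A e : R) x x' :
  (forall x y, B x -> B y -> euclid_norm (x - y) <= A * `|d x - d y|) -> 0 < A ->
  B x -> B x' -> `|restrict0 B d x - restrict0 B d x'| < e / A ->
  euclid_norm (x' - x) < e.
Proof.
move=> hA A0 Bx Bx'; rewrite /restrict0 !asboolT // => dxe.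
apply: le_lt_trans (hA _ _ Bx' Bx) _.
by rewrite distrC mulrC -ltr_pdivlMr.
Qed.

Lemma measurable_fun_random_vector d (T : measurableType d) (R : realType) n
    (X : T -> 'rV[R]_n) :
  random_vector X -> measurable_fun setT (X : T -> borel R n).
Proof. by move=> rvX _ A mA; rewrite setTI; exact: rvX. Qed.

Lemma measure_le_setI_conull d (T : measurableType d) (R : realType)
    (mu : {measure set T -> \bar R}) (A G : set T) :
  measurable A -> measurable G -> mu (~` G) = 0%E -> (mu A <= mu (A `&` G))%E.
Proof.
move=> mA mG G0.
have eA : A = (A `&` G) `|` (A `&` ~` G).
  by apply/seteqP; split => x; [case: (pselect (G x)) => Gx Ax; [left|right] | case => -[]].
rewrite [X in (mu X <= _)%E]eA.
apply: le_trans (measureU2 _ _ _) _.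
- exact: measurableI.
- by apply: measurableI => //; exact: measurableC.
have AG0 : (mu (A `&` ~` G) <= 0)%E.
  rewrite -G0; apply: le_measure.
  - by rewrite inE; apply: measurableI => //; exact: measurableC.
  - by rewrite inE; exact: measurableC.
  exact: subIsetr.
by apply: le_trans (leeD2l _ AG0) _; rewrite adde0.
Qed.

Lemma mould_of_ball_lower_bound d (T : measurableType d) (R : realType)
    (P : probability T R) n (X : T -> 'rV[R]_n) m x (a A : R) :
  0 < a -> 0 < A ->
  (forall e, 0 < e -> e <= A ->
    ((a * e ^+ m)%:E <= P [set w | (euclid_norm (X w - x) < e)%R])%E) ->
  mould P X m x.
Proof.
move=> a0 A0 hP; rewrite /mould /= limf_einfE.
apply: (@lt_le_trans _ _ a%:E); first by rewrite lte_fin.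
have near0 : (0:R)^'+ [set e : R | 0 < e <= A].
  apply: filterS (filterI (nbhs_right_gt 0) (nbhs_right_lt A0)) => e [e0 eA].
  by apply/andP; split => //; exact: ltW.
apply: le_trans (ereal_sup_ubound _); last by exists [set e : R | 0 < e <= A].
apply/ereal_infP => _ [e /andP[e0 eA] <-].
apply: le_trans (lee_wpmul2r _ (hP e e0 eA)); last first.
  by change ((0%R)%:E <= ((e ^+ m)^-1)%:E)%E; rewrite lee_fin invr_ge0 exprn_ge0 // ltW.
have em : e ^+ m \is a GRing.unit by rewrite unitfE expf_neq0 // gt_eqF.
by rewrite -EFinM lee_fin mulrK.
Qed.

Lemma mould_of_lower_bound_image d (T : measurableType d) (R : realType)
    (P : probability T R) n m (X : T -> 'rV[R]_n) (Y : T -> 'rV[R]_m)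
    (G : set T) (A a : R) w :
  measurable_fun setT (X : T -> borel R n) -> measurable_fun setT (Y : T -> borel R m) ->
  measurable G -> P (~` G) = 0%E -> 0 < A -> 0 < a ->
  (forall w' e, G w' -> `|Y w - Y w'| < e / A -> euclid_norm (X w' - X w) < e) ->
  (forall r, 0 < r -> r <= 1 -> ((a * r ^+ m)%:E <= P (Y @^-1` ball (Y w) r))%E) ->
  mould P X m (X w).
Proof.
move=> mX mY mG G0 A0 a0 lipXY hY.
apply: (@mould_of_ball_lower_bound _ _ _ _ _ _ _ _ (a / A ^+ m) A) => //.
  by rewrite divr_gt0 // exprn_gt0.
move=> e e0 eA.
have mball : measurable (Y @^-1` ball (Y w) (e / A)).
  rewrite -[S in measurable S]setTI; apply: (mY measurableT).
  by apply: open_measurable_rV; exact: ball_open.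
have eA1 : e / A <= 1 by rewrite ler_pdivrMr // mul1r.
have := hY (e / A) (divr_gt0 e0 A0) eA1.
rewrite expr_div_n mulrA [X in X%:E]mulrAC => /le_trans; apply.
apply: le_trans (measure_le_setI_conull mball mG G0) _; apply: le_measure; rewrite ?inE.
- exact: measurableI.
- have := mX measurableT _ (open_measurable_rV (@open_euclid_ball R n (X w) e)).
  by rewrite setTI.
- move=> w' [Yw' Gw']; apply: lipXY Gw' _.
  by move: Yw'; rewrite /= -ball_normE /ball_.
Qed.

Theorem mainTheorem7 (R : realType) (dT : measure_display) (T : measurableType dT)
  (P : probability T R) (n m : nat) (X : T -> 'rV[R]_n) (B : set 'rV[R]_n)
  (d : 'rV[R]_n -> 'rV[R]_m) (Nn : 'rV[R]_n -> R) (Nm : 'rV[R]_m -> R) (c : R) :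
  random_vector X ->
  borel_rV B ->
  {ae P, forall w, B (X w)} ->
  measurable_on_rV B d ->
  is_norm Nn -> is_norm Nm ->
  0 < c ->
  (forall x y, B x -> B y -> c * Nn (x - y) <= Nm (d x - d y)) ->
  {ae P, forall w, mould P X m (X w)}.
Proof.
move=> rvX bB aeB md hNn hNm c0 hd.
have [A A0 hA] := euclid_le_image_dist hNn hNm c0 hd.
have mX := measurable_fun_random_vector rvX.
pose Y := restrict0 B d \o X.
have mY : measurable_fun setT (Y : T -> borel R m).
  exact: measurableT_comp (measurable_restrict0 bB md) mX.
have [N [mN nuN0 hN]] := ae_ball_lower_bound (distribution P (mfun_Sub (mem_set mY))).
have mXB : measurable (X @^-1` B) by exact: rvX.
have XB1 : P (~` (X @^-1` B)) = 0%E := measure_negligible (measurableC mXB) aeB.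
have mYN : measurable (Y @^-1` N).
  by rewrite -[S in measurable S]setTI; exact: mY measurableT _ mN.
have YN0 : P.-negligible (Y @^-1` N) by exists (Y @^-1` N); split => //; exact: nuN0.
apply: (negligibleS _ (negligibleU aeB YN0)) => w /= Mw.
have [XwB|] := pselect (B (X w)); last by left.
right; apply: contrapT => YwN; apply: Mw.
have [a a0 ha] : exists2 a : R, 0 < a & forall r, 0 < r -> r <= 1 ->
    ((a * r ^+ m)%:E <= P (Y @^-1` ball (Y w) r))%E.
  by apply: contrapT => h; apply: YwN; exact: hN.
apply: (mould_of_lower_bound_image mX mY mXB XB1 A0 a0 _ ha) => w' e Bw'.
exact: (restrict0_ball_euclid (x := X w) (x' := X w') hA A0 XwB Bw').
Qed.
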